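(* $W_c(4,2)=34$. More precisely: there is a 2-coloring of $\mathbb{Z}_{33}$ with no monochromatic non-degenerate 4-AP, while for every $M\ge 34$ every 2-coloring of $\mathbb{Z}_M$ contains a monochromatic non-degenerate 4-AP.
   Context: For an integer $M\ge1$, a 4-AP in $\mathbb{Z}_M=\mathbb{Z}/M\mathbb{Z}$ is a tuple $(i,i+r,i+2r,i+3r)\pmod M$ with $i\in\mathbb{Z}_M$ and $r\in\{1,\dots,M-1\}$; it is non-degenerate if its four residues are pairwise distinct, and monochromatic under a coloring $\chi:\mathbb{Z}_M\to\{B,R\}$ if all four terms receive the same color. The cyclic van der Waerden number $W_c(4,2)$ is the smallest $N$ such that for all $M\ge N$, every 2-coloring of $\mathbb{Z}_M$ contains a monochromatic non-degenerate 4-AP. *)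

From mathcomp Require Import all_boot.
Set Implicit Arguments. Unset Strict Implicit. Unset Printing Implicit Defensive.

(* Z_M is represented by 'I_M (residues 0..M-1); colors B/R by bool. *)

Definition ap_term (M i r k : nat) : nat := (i + k * r) %% M.

Definition nondeg4 (M i r : nat) : bool :=
  uniq [:: ap_term M i r 0; ap_term M i r 1; ap_term M i r 2; ap_term M i r 3].

Definition has_mono_nondeg_4AP (M : nat) (chi : 'I_M -> bool) : Prop :=
  exists (i : 'I_M) (r : nat),
    [/\ 0 < r, r < M, nondeg4 M i r &
      forall (k : nat) (j : 'I_M), k < 4 -> nat_of_ord j = ap_term M i r k ->
        chi j = chi i].

From mathcomp Require Import all_boot zify.

(* For M >= 35 the theorem reduces to the classical van der Waerden number
   W(4,2) = 35: every 2-colouring of {0, ..., 34} has a monochromatic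
   progression a, a+d, a+2d, a+3d, and as its terms are distinct residues
   below M it is a non-degenerate 4-AP of Z_M.  W(4,2) = 35 and the case
   M = 34 are checked by a backtracking search over colourings of initial
   segments, pruning a branch as soon as the newest point completes a
   monochromatic progression.  The colouring of Z_33 repeats the block
   11101101000 three times. *)

Set Implicit Arguments.
Unset Strict Implicit.
Unset Printing Implicit Defensive.

Section MonoSearch.

Variables (T : eqType) (points : T -> seq nat) (table : seq (seq T)).

Definition completes_mono (s : seq bool) (c : bool) : bool :=
  has (fun p => all (fun x => (x == size s) || (x < size s) && (nth false s x == c))
                    (points p))
      (nth [::] table (size s)).

(* [if] rather than [||] so that the VM does not explore the pruned subtree. *)
Fixpoint mono_search (k : nat) (s : seq bool) : bool :=
  if k is k'.+1 then
    all (fun c => if completes_mono s c then true else mono_search k' (rcons s c))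
        [:: true; false]
  else false.

Lemma mono_searchP k s (f : nat -> bool) :
  mono_search k s -> (forall x, x < size s -> f x = nth false s x) ->
  exists n p, p \in nth [::] table n /\ {in points p, forall x, f x = f n}.
Proof.
elim: k s => [|k IHk] s //= /and3P[s_true s_false _] f_s.
have /orP[/hasP[p p_n /allP mono_p] | ext_s] :
    completes_mono s (f (size s)) || mono_search k (rcons s (f (size s))).
  by case: (f (size s)); [move: s_true | move: s_false]; case: ifP.
- exists (size s), p; split=> // x /mono_p /orP[/eqP -> // | /andP[x_s /eqP <-]].
  exact: f_s.
- apply: IHk ext_s _ => x; rewrite size_rcons ltnS leq_eqVlt nth_rcons.
  by case/orP=> [/eqP -> | x_s]; rewrite ?ltnn ?eqxx // x_s f_s.
Qed.

End MonoSearch.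

Definition layered (T : Type) (level : T -> nat) (cands : seq T) (N : nat) :
    seq (seq T) :=
  [seq [seq p <- cands | level p == n] | n <- iota 0 N].

Lemma mem_layered (T : eqType) (level : T -> nat) cands N n p :
  p \in nth [::] (layered level cands N) n -> p \in cands.
Proof.
rewrite /layered; have [n_N | N_n] := ltnP n N.
  by rewrite (nth_map 0) ?size_iota // mem_filter => /andP[].
by rewrite nth_default // size_map size_iota.
Qed.

Definition ap_points (M : nat) (p : nat * nat) : seq nat :=
  [seq ap_term M p.1 p.2 k | k <- iota 0 4].

Definition ap_cands (M : nat) (good : nat -> nat -> bool) : seq (nat * nat) :=
  [seq p <- [seq (i, r) | i <- iota 0 M, r <- iota 1 M.-1] | good p.1 p.2].

(* A progression can only be detected once its largest point is coloured. *)
Definition ap_table (M : nat) (good : nat -> nat -> bool) : seq (seq (nat * nat)) :=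
  layered (fun p => foldr maxn 0 (ap_points M p)) (ap_cands M good) M.

Lemma mem_ap_table M good n i r :
  (i, r) \in nth [::] (ap_table M good) n -> [/\ i < M, 0 < r, r < M & good i r].
Proof.
move/mem_layered; rewrite mem_filter => /andP[/= good_ir /allpairsP[[i' r'] /=]].
rewrite !mem_iota -subn1 => -[/andP[_ i_M] /andP[r_gt0 r_M] [eq_i eq_r]].
by rewrite eq_i eq_r in good_ir *; split=> //; lia.
Qed.

Lemma ap_term_small M i r k : i + 3 * r < M -> k < 4 -> ap_term M i r k = i + k * r.
Proof. by move=> ir_M k_lt4; rewrite /ap_term modn_small //; nia. Qed.

Lemma nondeg4_small M i r : 0 < r -> i + 3 * r < M -> nondeg4 M i r.
Proof.
move=> r_gt0 ir_M; rewrite /nondeg4 !ap_term_small //= !inE.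
apply/and4P; split; lia.
Qed.

Lemma ap_search_mono M good fuel (f : nat -> bool) :
  mono_search (ap_points M) (ap_table M good) fuel [::] ->
  exists i r, [/\ i < M, 0 < r, r < M, good i r &
                  forall k, k < 4 -> f (ap_term M i r k) = f i].
Proof.
move=> /(mono_searchP (f := f))[// | n [[i r] [/mem_ap_table[i_M r_gt0 r_M good_ir] mono]]].
have f_ap k : k < 4 -> f (ap_term M i r k) = f n.
  by move=> k_lt4; apply: mono; apply: map_f; rewrite mem_iota.
exists i, r; split=> // k k_lt4; rewrite f_ap // -(f_ap 0) //.
by rewrite /ap_term addn0 modn_small.
Qed.

Definition ext_col M (chi : 'I_M -> bool) (x : nat) : bool :=
  if insub x is Some j then chi j else false.

Lemma ext_colE M (chi : 'I_M -> bool) (j : 'I_M) : ext_col chi j = chi j.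
Proof. by rewrite /ext_col valK. Qed.

Lemma has_mono_nondeg_4AP_ext M (chi : 'I_M -> bool) i r :
  i < M -> 0 < r -> r < M -> nondeg4 M i r ->
  (forall k, k < 4 -> ext_col chi (ap_term M i r k) = ext_col chi i) ->
  has_mono_nondeg_4AP chi.
Proof.
move=> i_M r_gt0 r_M nondeg mono; exists (Ordinal i_M), r; split=> // k j k_lt4 j_ap.
by rewrite -!ext_colE /= j_ap mono.
Qed.

Lemma no_mono_nondeg_4AP M (f : nat -> bool) :
  all (fun i => all (fun r => nondeg4 M i r ==>
                        has (fun k => f (ap_term M i r k) != f i) (iota 0 4))
                    (iota 1 M.-1)) (iota 0 M) ->
  ~ has_mono_nondeg_4AP (fun j : 'I_M => f j).
Proof.
move=> /allP check [i [r [r_gt0 r_M nondeg mono]]].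
have i_range : val i \in iota 0 M by rewrite mem_iota ltn_ord.
have r_range : r \in iota 1 M.-1 by rewrite mem_iota -subn1; lia.
have /hasP[k] := implyP (allP (check _ i_range) _ r_range) nondeg.
rewrite mem_iota => k_lt4; have ap_M : ap_term M i r k < M.
  by rewrite ltn_pmod // (ltn_trans r_gt0 r_M).
by have /= -> := mono k (Ordinal ap_M) k_lt4 erefl; rewrite eqxx.
Qed.

Definition chi33 (j : nat) : bool :=
  nth false [:: true; true; true; false; true; true; false; true; false; false; false]
      (j %% 11).

Lemma chi33_no_mono : ~ has_mono_nondeg_4AP (fun j : 'I_33 => chi33 j).
Proof. by apply: no_mono_nondeg_4AP; vm_compute. Qed.

Lemma vdW_4_2 :
  mono_search (ap_points 35) (ap_table 35 (fun a d => a + 3 * d < 35)) 35 [::].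
Proof. by vm_compute. Qed.

Lemma cyclic_vdW_4_2_34 : mono_search (ap_points 34) (ap_table 34 (nondeg4 34)) 34 [::].
Proof. by vm_compute. Qed.

Lemma has_mono_nondeg_4AP_34 (chi : 'I_34 -> bool) : has_mono_nondeg_4AP chi.
Proof.
have [i [r [i_M r_gt0 r_M nondeg mono]]] := ap_search_mono (ext_col chi) cyclic_vdW_4_2_34.
exact: has_mono_nondeg_4AP_ext mono.
Qed.

Lemma has_mono_nondeg_4AP_ge35 M (chi : 'I_M -> bool) :
  35 <= M -> has_mono_nondeg_4AP chi.
Proof.
move=> M_ge35.
have [a [d [_ d_gt0 _ ad_small mono]]] := ap_search_mono (ext_col chi) vdW_4_2.
have ad_M : a + 3 * d < M by lia.
apply: (@has_mono_nondeg_4AP_ext _ _ a d); rewrite ?nondeg4_small //; try lia.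
by move=> k k_lt4; rewrite (ap_term_small ad_M) // -(ap_term_small ad_small) ?mono.
Qed.

Theorem theorem11 :
  (exists chi : 'I_33 -> bool, ~ has_mono_nondeg_4AP chi) /\
  (forall M : nat, 34 <= M ->
     forall chi : 'I_M -> bool, has_mono_nondeg_4AP chi).
Proof.
split; first by exists (fun j => chi33 j); exact: chi33_no_mono.
move=> M; rewrite leq_eqVlt => /orP[/eqP <- | M_gt34] chi.
  exact: has_mono_nondeg_4AP_34.
exact: has_mono_nondeg_4AP_ge35.
Qed.
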